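(* Let $f(m_\ell, m_s)$ be any function with $f(m_\ell,m_s) = o(m_\ell + m_s)$. Then for all sufficiently large $m_\ell m_s$, on the $m_\ell \times m_s$ grid $G$ (with $m_\ell \ge m_s \ge 2$), the fraction of instances $(G, X_I, X_G)$ (over all pairs of configurations with all vertices occupied) whose minimum makespan is at most $f(m_\ell, m_s)$ is at most $(1/2)^{m_\ell/4}$.
   Context: The $m_\ell \times m_s$ grid graph has vertex set $\{1,\dots,m_\ell\}\times\{1,\dots,m_s\}$ with edges between vertices at $\ell_1$-distance 1. A configuration is a bijection from robot labels $\{1,\dots,m_\ell m_s\}$ to the vertex set. A move sequence proceeds in synchronous steps: each robot stays put or moves to an adjacent vertex, with no two robots at the same vertex afterwards and no two robots traversing the same edge in opposite directions. The minimum makespan of $(G,X_I,X_G)$ is the least number of steps of such a sequence taking $X_I$ to $X_G$. *)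

From HB Require Import structures.
From mathcomp Require Import all_boot all_order all_algebra.
From Stdlib Require Import ClassicalEpsilon.
Set Implicit Arguments. Unset Strict Implicit. Unset Printing Implicit Defensive.
Import Order.TTheory GRing.Theory Num.Theory.

(* Vertices of the ml x ms grid: 'I_ml * 'I_ms (0-indexed copy of
   {1..ml} x {1..ms}).  Robot labels: 'I_(ml*ms) (copy of {1..ml*ms}). *)
Definition vert (ml ms : nat) := ('I_ml * 'I_ms)%type.
Definition label (ml ms : nat) := 'I_(ml * ms).

Definition grid_adj (ml ms : nat) (u v : vert ml ms) : bool :=
  ((u.1 == v.1 :> nat) && ((u.2.+1 == v.2 :> nat) || (v.2.+1 == u.2 :> nat)))
  || ((u.2 == v.2 :> nat) && ((u.1.+1 == v.1 :> nat) || (v.1.+1 == u.1 :> nat))).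

(* a map from labels to vertices; a configuration is such a map that is a
   bijection (= injective, since both types have ml*ms elements) *)
Definition cmap (ml ms : nat) := {ffun label ml ms -> vert ml ms}.

Definition configs (ml ms : nat) : {set cmap ml ms} :=
  [set X : cmap ml ms | injectiveb X].

Definition step (ml ms : nat) (X Y : cmap ml ms) : bool :=
  [&& [forall r, (Y r == X r) || grid_adj (X r) (Y r)],
      injectiveb Y
    & [forall r1, forall r2, (r1 != r2) ==>
         ~~ ((Y r1 == X r2) && (Y r2 == X r1))] ].

Fixpoint reach (ml ms : nat) (k : nat) (X Y : cmap ml ms) : bool :=
  if k is k'.+1 then [exists Z, step X Z && @reach ml ms k' Z Y]
  else X == Y.

Definition makespan_le (R : realFieldType) (ml ms : nat)
    (XI XG : cmap ml ms) (t : R) : Prop :=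
  exists k : nat, reach k XI XG /\ (k%:R <= t)%R.

Definition pbool (P : Prop) : bool :=
  if excluded_middle_informative P then true else false.

Definition good_instances (R : realFieldType) (ml ms : nat) (t : R)
  : {set cmap ml ms * cmap ml ms} :=
  [set p in setX (configs ml ms) (configs ml ms) |
     pbool (makespan_le p.1 p.2 t)].

Definition frac_good (R : realFieldType) (ml ms : nat) (t : R) : R :=
  (#|good_instances ml ms t|%:R / (#|configs ml ms| ^ 2)%:R)%R.

From HB Require Import structures.
From mathcomp Require Import all_boot all_order all_algebra.
From mathcomp Require Import zify.
From Stdlib Require Import ClassicalEpsilon.
Import Order.TTheory GRing.Theory Num.Theory.
Set Implicit Arguments. Unset Strict Implicit. Unset Printing Implicit Defensive.

(* In k steps no robot changes its row by more than k, so a makespan of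
   o(m_l + m_s) forces every robot to end within K < h/2 rows of its start,
   where h = m_l/2.  For every bit vector b of length h, exchanging the vertices
   (i,0) and (i+h,0) of the goal for the i with b i maps such instances to
   pairs of configurations, and the pair determines b because an exchanged robot
   moved h > 2K rows.  These 2^h injections have disjoint images, so at most a
   2^-h fraction of all instances has small makespan. *)

Section RowDisplacement.

Variables ml ms : nat.

Definition row (v : vert ml ms) : nat := v.1.

Definition row_close (d : nat) (X Y : cmap ml ms) : Prop :=
  forall r, row (X r) <= row (Y r) + d /\ row (Y r) <= row (X r) + d.

Lemma row_close_trans d e (X Y Z : cmap ml ms) :
  row_close d X Y -> row_close e X Z -> row_close (d + e) Y Z.
Proof. by move=> cXY cXZ r; have := cXY r; have := cXZ r; lia. Qed.

Lemma row_close_le d e (X Y : cmap ml ms) :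
  d <= e -> row_close d X Y -> row_close e X Y.
Proof. by move=> le_de cXY r; have := cXY r; lia. Qed.

Lemma row_step (X Y : cmap ml ms) : step X Y -> row_close 1 X Y.
Proof.
case/and3P=> /forallP moves _ _ r; move: (moves r).
case: (X r) (Y r) => [a b] [c d]; rewrite /row /grid_adj /=.
by case/orP=> [/eqP [-> _] | /orP [/andP [/eqP-> _] | /andP [_ /orP [] /eqP]]]; lia.
Qed.

Lemma row_reach k (X Y : cmap ml ms) : reach k X Y -> row_close k X Y.
Proof.
elim: k X => [|k IHk] X /=; first by move=> /eqP-> r; lia.
case/existsP=> Z /andP [stepXZ reachZY] r.
by have := row_step stepXZ r; have := IHk Z reachZY r; lia.
Qed.

Lemma conf_onto (X : cmap ml ms) v : X \in configs ml ms -> exists r, X r = v.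
Proof.
rewrite inE => /injectiveP injX.
have := inj_card_onto injX _ v; rewrite card_prod !card_ord.
by case/(_ (leqnn _))/codomP => r ->; exists r.
Qed.

End RowDisplacement.

Section RowSwap.

Variables (h : nat) (b : {ffun 'I_h -> bool}).

Definition bitn (x : nat) : bool := odflt false (omap b (insub x)).

Lemma bitn_ord (i : 'I_h) : bitn i = b i.
Proof. by rewrite /bitn valK. Qed.

Definition swap_row (x : nat) : nat :=
  if x < h then (if bitn x then x + h else x)
  else if x < h + h then (if bitn (x - h) then x - h else x)
  else x.

Lemma swap_row_lo (i : 'I_h) : swap_row i = if b i then i + h else i.
Proof. by rewrite /swap_row ltn_ord bitn_ord. Qed.

Lemma swap_row_hi (i : 'I_h) : swap_row (i + h) = if b i then nat_of_ord i else i + h.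
Proof.
rewrite /swap_row ifF; last by have := ltn_ord i; lia.
by rewrite ltn_add2r ltn_ord addnK bitn_ord.
Qed.

Lemma swap_rowK : involutive swap_row.
Proof.
move=> x; have [lt_xh | le_hx] := ltnP x h.
  have -> : x = Ordinal lt_xh by [].
  by rewrite swap_row_lo; case: ifP => bi; rewrite ?swap_row_hi ?swap_row_lo bi.
have [lt_x2h | le_2hx] := ltnP x (h + h); last by rewrite /swap_row !ifF //; lia.
have lt_xh' : x - h < h by lia.
have -> : x = Ordinal lt_xh' + h by rewrite /= subnK.
by rewrite swap_row_hi; case: ifP => bi; rewrite ?swap_row_lo ?swap_row_hi bi.
Qed.

Lemma swap_row_lt x n : h + h <= n -> x < n -> swap_row x < n.
Proof. by rewrite /swap_row => le_2h_n lt_xn; do !case: ifP => ?; lia. Qed.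

End RowSwap.

Section VertexSwap.

Variables (ml ms h : nat).
Hypothesis h_le : h + h <= ml.

Definition swap_vert (b : {ffun 'I_h -> bool}) (v : vert ml ms) : vert ml ms :=
  if v.2 == 0 :> nat then (insubd v.1 (swap_row b v.1), v.2) else v.

Lemma swap_vertE b v :
  row (swap_vert b v) = (if v.2 == 0 :> nat then swap_row b (row v) else row v)
  /\ (swap_vert b v).2 = v.2.
Proof. by rewrite /swap_vert /row; case: ifP => //= _; rewrite val_insubd swap_row_lt. Qed.

Lemma swap_vertK b : involutive (swap_vert b).
Proof.
move=> v; have [row1 col1] := swap_vertE b v.
have [row2 col2] := swap_vertE b (swap_vert b v).
rewrite [LHS]surjective_pairing [RHS]surjective_pairing col2 col1; congr pair.
apply: val_inj; change (row (swap_vert b (swap_vert b v)) = row v).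
by rewrite row2 col1 row1; case: (v.2 == 0 :> nat); rewrite ?swap_rowK.
Qed.

Definition swap_goal (b : {ffun 'I_h -> bool}) (Y : cmap ml ms) : cmap ml ms :=
  [ffun r => swap_vert b (Y r)].

Lemma swap_goalK b : involutive (swap_goal b).
Proof. by move=> Y; apply/ffunP => r; rewrite !ffunE swap_vertK. Qed.

Lemma swap_goal_config b Y :
  Y \in configs ml ms -> swap_goal b Y \in configs ml ms.
Proof.
rewrite !inE => /injectiveP injY; apply/injectiveP => r1 r2.
by rewrite !ffunE => /(can_inj (swap_vertK b)); apply: injY.
Qed.

(* The robot at (i,0) in Y is at (i+h,0) after the swap by b; if b' i failed,
   that robot would also be at row i+h in Y', h rows away from its row in Y. *)
Lemma swap_goal_bit_le (b b' : {ffun 'I_h -> bool}) (Y Y' : cmap ml ms) :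
  0 < ms -> Y \in configs ml ms -> row_close h.-1 Y Y' ->
  swap_goal b Y = swap_goal b' Y' -> forall i, b i -> b' i.
Proof.
move=> ms_gt0 confY closeYY' eq_swap i bi.
have lt_iml : i < ml by have := ltn_ord i; lia.
have [r Yr] := conf_onto (Ordinal lt_iml, Ordinal ms_gt0) confY.
have /(congr1 (swap_vert b')) := congr1 (fun Z : cmap ml ms => Z r) eq_swap.
rewrite !ffunE swap_vertK Yr => Y'r.
have [rowY' _] := swap_vertE b' (swap_vert b (Ordinal lt_iml, Ordinal ms_gt0)).
have [rowY colY] := swap_vertE b (Ordinal lt_iml, Ordinal ms_gt0).
rewrite Y'r colY rowY /= swap_row_lo bi swap_row_hi in rowY'.
apply/negPn/negP => /negbTE b'i; rewrite b'i in rowY'.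
by have := closeYY' r; have := ltn_ord i; rewrite Yr rowY' /row /=; lia.
Qed.

Lemma card_row_close (K : nat) (S : {set cmap ml ms * cmap ml ms}) :
  0 < ms -> K + K < h ->
  {in S, forall p,
    [/\ p.1 \in configs ml ms, p.2 \in configs ml ms & row_close K p.1 p.2]} ->
  2 ^ h * #|S| <= #|configs ml ms| ^ 2.
Proof.
move=> ms_gt0 lt_2K_h inS.
pose swap_pair (q : {ffun 'I_h -> bool} * (cmap ml ms * cmap ml ms)) :=
  (q.2.1, swap_goal q.1 q.2.2).
pose D := setX [set: {ffun 'I_h -> bool}] S.
have cardD : #|D| = 2 ^ h * #|S|.
  by rewrite cardsX cardsT card_ffun card_bool card_ord.
have inj_swap : {in D &, injective swap_pair}.
  move=> [b [X Y]] [b' [X' Y']]; rewrite !inE /= => /inS[_ confY cXY].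
  move=> /inS[_ confY' cXY'] [eqX eq_swap]; subst X'.
  have cYY' : row_close h.-1 Y Y'.
    by apply: (row_close_le _ (row_close_trans cXY cXY')); lia.
  have cY'Y : row_close h.-1 Y' Y by move=> r; have := cYY' r; lia.
  have eq_b : b = b'.
    apply/ffunP => i; apply/idP/idP; first exact: swap_goal_bit_le eq_swap i.
    exact: swap_goal_bit_le (esym eq_swap) i.
  by rewrite -eq_b in eq_swap *; rewrite (can_inj (swap_goalK b) eq_swap).
have sub_configs : swap_pair @: D \subset setX (configs ml ms) (configs ml ms).
  apply/subsetP => p /imsetP [[b [X Y]] /setXP [_ /inS [confX confY _]] ->].
  by apply/setXP; split; last exact: swap_goal_config.
rewrite -cardD -(card_in_imset inj_swap).
by apply: leq_trans (subset_leq_card sub_configs) _; rewrite cardsX expnS expn1.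
Qed.

End VertexSwap.

Lemma good_instances_row_close (R : realFieldType) ml ms (t : R) K :
  (forall k : nat, (k%:R <= t)%R -> k <= K) ->
  {in good_instances ml ms t, forall p,
    [/\ p.1 \in configs ml ms, p.2 \in configs ml ms & row_close K p.1 p.2]}.
Proof.
move=> t_le [X Y]; rewrite inE => /andP [/setXP [confX confY]].
rewrite /pbool; case: excluded_middle_informative => // [[k [reach_k k_le]]] _.
by split=> //; apply: row_close_le (t_le _ k_le) (row_reach reach_k).
Qed.

Lemma frac_good_le (R : realFieldType) ml ms (t : R) h :
  2 ^ h * #|good_instances ml ms t| <= #|configs ml ms| ^ 2 ->
  (frac_good ml ms t <= (2%:R^-1) ^+ h)%R.
Proof.
rewrite /frac_good; set g := #|_|; set c := #|_| => bound.
have [c0 | c_gt0] := posnP (c ^ 2).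
  by rewrite c0 invr0 mulr0 exprn_ge0 // invr_ge0 ler0n.
rewrite ler_pdivrMr ?ltr0n // exprVn -natrX ler_pdivlMl ?ltr0n ?expn_gt0 //.
by rewrite -natrM ler_nat.
Qed.

Lemma half_pow_le (R : realFieldType) (x : R) h n :
  n <= 4 * h -> (0 <= x)%R -> (x <= (2%:R^-1) ^+ h)%R -> (x ^+ 4 <= (2%:R^-1) ^+ n)%R.
Proof.
move=> le_n x_ge0 x_le; have half_ge0 : (0 <= (2%:R : R)^-1)%R by rewrite invr_ge0 ler0n.
apply: le_trans (lerXn2r 4 _ _ x_le) _; rewrite ?nnegrE ?exprn_ge0 //.
rewrite -exprM mulnC; apply: ler_wiXn2l => //.
by rewrite invf_le1 ?ltr0n // ler1n.
Qed.

Theorem lemma5 (R : realFieldType) (f : nat -> nat -> R)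
  (f_small : forall eps : R, (0 < eps)%R ->
     exists N : nat, forall ml ms : nat, (2 <= ms)%N -> (ms <= ml)%N ->
       (N <= ml + ms)%N -> (`|f ml ms| <= eps * (ml + ms)%:R)%R) :
  exists N : nat, forall ml ms : nat, (2 <= ms)%N -> (ms <= ml)%N ->
    (N <= ml * ms)%N ->
    (frac_good ml ms (f ml ms) ^+ 4 <= (2%:R^-1) ^+ ml)%R.
Proof.
have [N f_le] := f_small (16%:R^-1)%R (ltac:(by rewrite invr_gt0 ltr0n)).
exists (N * N) => ml ms ms_ge2 le_ms_ml le_N2; pose h := ml %/ 2.
have {}f_le := f_le ml ms ms_ge2 le_ms_ml (ltac:(nia)).
have t_le k : ((k%:R : R) <= f ml ms)%R -> k <= ml %/ 8.
  move=> /le_trans /(_ (le_trans (ler_norm _) f_le)).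
  by rewrite ler_pdivlMl ?ltr0n // -natrM ler_nat; lia.
have bound := card_row_close (ml := ml) (ms := ms) (h := h) (K := ml %/ 8)
  (ltac:(lia)) (ltac:(lia)) (ltac:(lia)) (good_instances_row_close t_le).
apply: half_pow_le (frac_good_le bound); first lia.
by rewrite /frac_good divr_ge0 ?ler0n.
Qed.
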